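(* Assume (A1)–(A3) and $\mu_u,\mu_v>0$, and write $u^*=w^*(\mu_u,p)$, $v^*=w^*(\mu_v,q)$. Then $$\lambda_1(\mu_u,p-cv^* )\sum_{i=1}^n\alpha_i(u_i^* )^2+c^3\lambda_1(\mu_v,q-bu^* )\sum_{i=1}^n\alpha_i(v_i^* )^2\le-\sum_{i=1}^n\alpha_i(cv_i^*-u_i^* )^2(cv_i^*+u_i^* )\le 0,$$ and if equality holds throughout then $u^*=cv^*$ and $bc=1$. In particular, $\lambda_1(\mu_v,q-bu^* )$ and $\lambda_1(\mu_u,p-cv^* )$ cannot both be $\ge 0$ unless both equal $0$, $bc=1$ and $u^*=cv^*$.
   Context: Let $n\ge2$ and $A=(a_{ij})_{n\times n}$ with $a_{ij}\ge0$ for $i\ne j$. The connection matrix $L$ has $L_{ij}=a_{ij}$ for $i\ne j$, $L_{ii}=-\sum_{k\ne i}a_{ki}$. The weighted digraph $\mathcal G$ associated with $A$ has vertices $\{1,\dots,n\}$ and, for $i\ne j$, an arc $(i,j)$ iff $a_{ji}>0$, with weight $a_{ji}$. A cycle is a list of distinct vertices $i_1,\dots,i_k$, $k\ge2$, with arcs $(i_m,i_{m+1})$, $m<k$, and $(i_k,i_1)$; its weight is the product of its arc weights; its reverse has all arcs reversed. $\mathcal G$ is cycle-balanced if for every cycle its reverse is also a cycle of $\mathcal G$ with the same weight. Assumptions: (A1) $b,c>0$, $bc\le1$, $p_i,q_i>0$; (A2) $L$ irreducible; (A3) $\mathcal G$ cycle-balanced. $\mathcal L$ is the matrix with $\mathcal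 L_{ij}=-a_{ij}$ ($i\ne j$), $\mathcal L_{ii}=\sum_{k\ne i}a_{ik}$, and $\alpha_i>0$ is the cofactor of its $i$-th diagonal entry. For $\mu>0$, $r\gg0$, $w^*(\mu,r)\gg0$ is the unique positive equilibrium of $w_i'=\mu\sum_jL_{ij}w_j+w_i(r_i-w_i)$. For $h\in\mathbb R^n$, $\lambda_1(\mu,h)=-s(\mu L+\mathrm{diag}(h_i))$, $s$ denoting the spectral bound (maximal real part of eigenvalues). *)

From mathcomp Require Import all_boot all_algebra.
From mathcomp Require Import all_classical all_reals.
From mathcomp.real_closed Require Import complex.
Set Implicit Arguments. Unset Strict Implicit. Unset Printing Implicit Defensive.
Import GRing.Theory Num.Theory.
Local Open Scope ring_scope.

Section Defs.
Variables (R : realType) (n : nat).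
Implicit Types (A M : 'M[R]_n) (s : seq 'I_n).

Definition connL A : 'M[R]_n :=
  \matrix_(i, j) (if i == j then - \sum_(k | k != i) A k i else A i j).

Definition calL A : 'M[R]_n :=
  \matrix_(i, j) (if i == j then \sum_(k | k != i) A i k else - A i j).

Definition alpha A (i : 'I_n) : R := cofactor (calL A) i i.

(* irreducible square matrix: there is no nonempty proper index set S
   with M_ij = 0 for all i in S, j not in S (i.e. M is not permutation-similar
   to a block triangular matrix) *)
Definition irreducible_mx M : Prop :=
  ~ exists S : {set 'I_n},
      [/\ S != finset.set0, S != [set: 'I_n] & forall i j, i \in S -> j \notin S -> M i j = 0].

(* arcs of the closed walk i_1,...,i_k,i_1 : pairs (i_m, i_{m+1}) and (i_k, i_1) *)
Definition cycle_arcs s : seq ('I_n * 'I_n) := zip s (rot 1 s).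

(* digraph G: arc (i,j) iff a_ji > 0, with weight a_ji *)
Definition is_graph_cycle A s : Prop :=
  [/\ uniq s, (2 <= size s)%N & all (fun p : 'I_n * 'I_n => 0 < A p.2 p.1) (cycle_arcs s)].

Definition cycle_weight A s : R :=
  \prod_(p <- cycle_arcs s) A p.2 p.1.

Definition cycle_balanced A : Prop :=
  forall s, is_graph_cycle A s ->
    is_graph_cycle A (rev s) /\ cycle_weight A (rev s) = cycle_weight A s.

Definition spectral_bound M : R :=
  sup [set complex.Re z | z in
        [set z : R[i] | eigenvalue (map_mx (real_complex R) M) z]]%classic.

Definition lambda1 A (mu : R) (h : 'I_n -> R) : R :=
  - spectral_bound (mu *: connL A + diag_mx (\row_i h i)).

(* w is a positive equilibrium of w_i' = mu sum_j L_ij w_j + w_i (r_i - w_i) *)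
Definition positive_equilibrium A (mu : R) (r w : 'I_n -> R) : Prop :=
  (forall i, 0 < w i) /\
  (forall i, mu * (\sum_j connL A i j * w j) + w i * (r i - w i) = 0).

End Defs.

From mathcomp Require Import all_boot all_algebra.
From mathcomp Require Import all_classical all_reals.
From mathcomp.real_closed Require Import complex polyrcf.
From mathcomp Require Import spectral ring lra.
Import order.Order.TTheory GRing.Theory Num.Theory.
Local Open Scope ring_scope.
Set Implicit Arguments. Unset Strict Implicit. Unset Printing Implicit Defensive.

(* 1. Weights.  alpha_i, the diagonal cofactors of the singular M-matrix
      calL, are positive (principal minors of an irreducible M-matrix) and
      satisfy Kirchhoff's law sum_k (alpha_j a_jk - alpha_k a_kj) = 0 (the
      adjugate has constant columns, by a maximum principle that relies on
      irreducibility).  Cycle balance then upgrades Kirchhoff's law to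
      detailed balance alpha_i a_ij = alpha_j a_ji: a nonzero net flow would
      carry a positive cycle whose weight differs from its reverse's.
   2. Rayleigh bound.  A matrix in detailed balance with positive weights is
      diagonally similar to a symmetric one, so by the spectral theorem its
      weighted quadratic form is at most its spectral bound times the
      weighted squared norm.  Taking the equilibrium of each species (u* or
      v* ) as test vector yields an energy inequality for its lambda_1.
   3. Algebra.  The two energy inequalities add up, through an exact cubic
      identity, to the claimed chain; its defect terms are nonnegative and
      vanish only when u* = c v* and b c = 1. *)

Lemma rot1_zip (S T : Type) (u : seq S) (v : seq T) :
  size u = size v -> rot 1 (zip u v) = zip (rot 1 u) (rot 1 v).
Proof.
case: u v => [|x u] [|y v] //= [Hs].
by rewrite !rot1_cons zip_rcons.
Qed.

Lemma perm_rev_arcs (T : eqType) (s : seq T) :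
  perm_eq (zip (rev s) (rot 1 (rev s)))
          (map (fun p => (p.2, p.1)) (zip s (rot 1 s))).
Proof.
have zip_swap (t1 t2 : seq T) :
    zip t2 t1 = map (fun p => (p.2, p.1)) (zip t1 t2).
  by elim: t1 t2 => [|x t1 IH] [|y t2] //=; rewrite IH.
rewrite -rev_rotr -rev_zip ?size_rotr // perm_rev zip_swap.
apply: perm_map.
have -> : zip s (rot 1 s) = rot 1 (zip (rotr 1 s) s).
  by rewrite rot1_zip ?size_rotr // rotrK.
by rewrite perm_sym perm_rot.
Qed.

Lemma cycle_arcsP (T : Type) (e : rel T) s :
  cycle e s -> all (fun p => e p.1 p.2) (zip s (rot 1 s)).
Proof.
case: s => [|x s] //=; rewrite rot1_cons.
move: {2 4}x => y; elim: s x => [|a s IH] x /=; first by rewrite andbT.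
by case/andP=> -> /IH.
Qed.

(* A skew-symmetric, divergence-free flow f on a finite set that is positive
   on some arc is positive along every arc of some simple cycle: from every
   vertex with an outgoing positive arc, following such an arc leads again
   to a vertex with an outgoing positive arc, so iterating must close up. *)
Section PositiveFlowCycle.
Variables (R : realFieldType) (T : finType) (f : T -> T -> R).
Hypothesis f_skew : forall x y, f x y = - f y x.
Hypothesis f_divfree : forall x, \sum_y f x y = 0.

Let has_out v := [exists k, 0 < f v k].
Let next v := odflt v [pick k | 0 < f v k].

Let next_pos v : has_out v -> 0 < f v (next v).
Proof.
rewrite /has_out /next; case: pickP => [k Hk|H] //= /existsP [k Hk].
by rewrite H in Hk.
Qed.

(* The inflow from v makes the outflow of next v necessary. *)
Let has_out_next v : has_out v -> has_out (next v).
Proof.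
move=> /next_pos Hv; apply: contraT => /existsPn H.
have Hneg : f (next v) v < 0 by rewrite f_skew oppr_lt0.
have : \sum_y f (next v) y < 0.
  rewrite (bigD1 v) //= -[X in _ < X](addr0 0) ltr_leD //.
  by apply: sumr_le0 => y _; rewrite leNgt H.
by rewrite f_divfree ltxx.
Qed.

Let has_out_iter k v : has_out v -> has_out (iter k next v).
Proof. by elim: k => [|k IH] //= /IH /has_out_next. Qed.

Lemma positive_flow_cycle x y : 0 < f x y ->
  exists c : seq T, [/\ uniq c, (2 <= size c)%N &
     all (fun p => 0 < f p.1 p.2) (zip c (rot 1 c))].
Proof.
move=> Hxy; have out_x : has_out x by apply/existsP; exists y.
have /trajectP [i Hi Heq] := looping_order next x.
set z := iter i next x.
have out_z : has_out z by apply: has_out_iter.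
have z_cycle : fcycle next (orbit next z).
  apply/(orbitPcycle 0 3); exists (order next x - i).-1.
  by rewrite prednK ?subn_gt0 // /z -iterD subnK ?(ltnW Hi).
exists (orbit next z); split; first exact: orbit_uniq.
  have next_z : next z != z.
    by apply/eqP => E; have := next_pos out_z; rewrite E; have := f_skew z z; lra.
  move: (in_orbit next z) (mem_orbit (in_orbit next z)) next_z.
  case: (orbit next z) => [|a [|b r]] //.
  by rewrite !inE => /eqP -> /eqP ->; rewrite eqxx.
apply/allP => p Hp; have /eqP <- := allP (cycle_arcsP z_cycle) p Hp.
apply: next_pos.
have : p.1 \in orbit next z.
  have := map_f (fun q : T * T => q.1) Hp.
  by rewrite -/(unzip1 _) unzip1_zip ?size_rot.
by rewrite -fconnect_orbit => /iter_findex <-; apply: has_out_iter.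
Qed.

End PositiveFlowCycle.

Lemma prod_seq_lt (R : realDomainType) (T : eqType) (r : seq T) (E1 E2 : T -> R) :
  r != [::] -> (forall x, x \in r -> 0 <= E1 x < E2 x) ->
  \prod_(x <- r) E1 x < \prod_(x <- r) E2 x.
Proof.
move=> r_nonempty H; rewrite big_seq [X in _ < X]big_seq; apply: ltr_prod => //.
by case: r r_nonempty {H} => // a r _; apply/hasP; exists a; rewrite ?mem_head.
Qed.

(* Along a closed walk every vertex is the tail of exactly one arc and the
   head of exactly one arc. *)
Lemma prod_arc_heads (R : comNzRingType) (T : eqType) (g : T -> R) (c : seq T) :
  \prod_(p <- zip c (rot 1 c)) g p.2 = \prod_(p <- zip c (rot 1 c)) g p.1.
Proof.
rewrite -(big_map (fun p => p.2) xpredT g) -(big_map (fun p => p.1) xpredT g).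
rewrite -/(unzip1 _) -/(unzip2 _) unzip1_zip ?size_rot // unzip2_zip ?size_rot //.
by apply: perm_big; rewrite perm_rot.
Qed.

(* Cycle balance together with Kirchhoff's law for positive weights al
   forces detailed balance al_i a_ij = al_j a_ji: otherwise the net flow
   al_x a_xy - al_y a_yx has a positive cycle, along which the product of
   the forward weights strictly exceeds that of the backward ones, i.e. the
   cycle and its reverse have different weights. *)
Section DetailedBalance.
Variables (R : realType) (n : nat) (A : 'M[R]_n).
Hypothesis A_nonneg : forall i j, i != j -> 0 <= A i j.
Hypothesis A_balanced : cycle_balanced A.
Variable al : 'I_n -> R.
Hypothesis al_pos : forall i, 0 < al i.
Hypothesis al_kirchhoff : forall j, \sum_k (al j * A j k - al k * A k j) = 0.

Lemma rev_graph_cycle (c : seq 'I_n) :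
  uniq c -> (2 <= size c)%N ->
  (forall p, p \in zip c (rot 1 c) -> 0 < A p.1 p.2) ->
  is_graph_cycle A (rev c) /\
  cycle_weight A (rev c) = \prod_(p <- zip c (rot 1 c)) A p.1 p.2.
Proof.
move=> c_uniq c_size c_pos; split.
  split; rewrite ?rev_uniq ?size_rev //.
  rewrite /cycle_arcs (perm_all _ (perm_rev_arcs c)) all_map.
  by apply/allP => p /c_pos.
by rewrite /cycle_weight (perm_big _ (perm_rev_arcs c)) big_map.
Qed.

Lemma detailed_balance i j : al i * A i j = al j * A j i.
Proof.
pose f x y := al x * A x y - al y * A y x.
have f_skew x y : f x y = - f y x by rewrite /f opprB.
suff f_nonpos x y : ~ 0 < f x y.
  have := f_nonpos i j; have := f_nonpos j i; rewrite (f_skew j i) /f; lra.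
move=> /(positive_flow_cycle f_skew al_kirchhoff) [c [c_uniq c_size c_pos]].
have arc_lt p : p \in zip c (rot 1 c) ->
    0 <= al p.2 * A p.2 p.1 < al p.1 * A p.1 p.2.
  move=> /(allP c_pos) /= Hp; rewrite -subr_gt0 Hp andbT.
  have p21 : p.2 != p.1 by apply: contraTneq Hp => ->; rewrite /f subrr ltxx.
  by rewrite mulr_ge0 ?A_nonneg // ltW.
have arc_pos p : p \in zip c (rot 1 c) -> 0 < A p.1 p.2.
  by move=> /arc_lt /andP [H1 /(le_lt_trans H1)]; rewrite pmulr_rgt0.
have [rev_cycle rev_weight] := rev_graph_cycle c_uniq c_size arc_pos.
have [_] := A_balanced rev_cycle; rewrite rev_weight revK /cycle_weight => Ew.
have arcs_nil : zip c (rot 1 c) != [::].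
  by rewrite -size_eq0 size_zip size_rot minnn -lt0n (leq_trans _ c_size).
have := prod_seq_lt arcs_nil arc_lt.
by rewrite !big_split /= prod_arc_heads Ew ltxx.
Qed.

End DetailedBalance.

Section MaximumPrinciple.
Variables (R : realType) (n : nat) (A : 'M[R]_n).
Hypothesis A_nonneg : forall i j, i != j -> 0 <= A i j.
Hypothesis A_irr : irreducible_mx (connL A).

Lemma closed_set_trivial (S : {set 'I_n}) :
  (forall i j, i \in S -> j \notin S -> A i j = 0) ->
  S = finset.set0 \/ S = [set: 'I_n].
Proof.
move=> S_closed; case: (eqVneq S finset.set0) => [->|S0]; first by left.
case: (eqVneq S [set: 'I_n]) => [->|ST]; first by right.
exfalso; apply: A_irr; exists S; split => // i j iS jS.
rewrite mxE; case: eqP => [E|_]; last exact: S_closed.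
by move: jS; rewrite -E iS.
Qed.

Lemma max_principle (w : 'I_n -> R) :
  (forall l, (forall k, w k <= w l) ->
     \sum_(k | k != l) A l k * (w l - w k) <= 0) ->
  forall k k', w k = w k'.
Proof.
move=> w_sub.
pose S := [set l | [forall k, w k <= w l]].
have S_closed l k : l \in S -> k \notin S -> A l k = 0.
  rewrite !inE => /forallP lS /forallPn [m]; rewrite -ltNge => km.
  have lk : w k < w l by apply: lt_le_trans km (lS m).
  have kl : k != l by apply: contraTneq lk => ->; rewrite ltxx.
  have terms_ge0 m0 : m0 != l -> 0 <= A l m0 * (w l - w m0).
    by move=> m0l; rewrite mulr_ge0 ?A_nonneg 1?eq_sym // subr_ge0.
  have : \sum_(k | k != l) A l k * (w l - w k) == 0.
    by rewrite eq_le w_sub //= sumr_ge0.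
  rewrite psumr_eq0 // => /allP /(_ k (mem_index_enum k)).
  by rewrite kl /= mulf_eq0 subr_eq0 (gt_eqF lk) orbF => /eqP.
move=> k k'; have [l _ l_max] := @arg_maxP _ R _ k xpredT w isT.
have lS : l \in S by rewrite inE; apply/forallP => j; apply: l_max.
case: (closed_set_trivial S_closed) => [S0|ST]; first by move: lS; rewrite S0 inE.
have all_max j : j \in S by rewrite ST inE.
apply/eqP; rewrite eq_le.
by move: (all_max k) (all_max k'); rewrite !inE => /forallP -> /forallP ->.
Qed.

End MaximumPrinciple.

Lemma char_poly_horner (F : comNzRingType) m (B : 'M[F]_m) t :
  (char_poly B).[t] = \det (t%:M - B).
Proof.
rewrite /char_poly -horner_evalE -det_map_mx; congr (\det _).
apply/matrixP => i j; rewrite !mxE /= rmorphB rmorphMn /=.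
by rewrite !horner_evalE hornerX hornerC.
Qed.

(* If x I + N is nonsingular for every x >= 0 then det N > 0: the monic
   polynomial t |-> det (t I + N) is positive for large t and, by the
   intermediate value theorem, has no root in [0, +oo). *)
Lemma det_pos_of_shifts_nonsingular (R : rcfType) m (N : 'M[R]_m) :
  (forall x, 0 <= x -> \det (x%:M + N) != 0) -> 0 < \det N.
Proof.
move=> shift_nonsing.
pose P := char_poly (- N).
have P_eval t : P.[t] = \det (t%:M + N) by rewrite char_poly_horner opprK.
have lc_P : lead_coef P = 1 by apply/monicP; apply: char_poly_monic.
have lc_P_pos : 0 < lead_coef P by rewrite lc_P ltr01.
have [T0 P_large] := poly_pinfty_gt_lc lc_P_pos.
set T := Num.max T0 0.
have PT : 1 <= P.[T] by rewrite -lc_P; apply: P_large; rewrite le_max lexx.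
rewrite ltNge; apply/negP => det_le0.
have T_ge0 : 0 <= T by rewrite le_max lexx orbT.
have sign_change : P.[0] <= 0 <= P.[T].
  by rewrite P_eval raddf0 add0r det_le0 /= (le_trans ler01).
have [x /andP [x0 _]] := poly_ivt T_ge0 sign_change.
by rewrite /root P_eval (negbTE (shift_nonsing x x0)).
Qed.

(* The weights alpha_i: calL is a singular M-matrix whose adjugate has all
   columns constant (by the maximum principle), which yields Kirchhoff's law
   for alpha; the principal minors of calL are positive because shifting
   them by x I, x >= 0, keeps them nonsingular (maximum principle again). *)
Section Alpha.
Variables (R : realType) (n : nat) (A : 'M[R]_n).
Hypothesis A_nonneg : forall i j, i != j -> 0 <= A i j.
Hypothesis A_irr : irreducible_mx (connL A).

Lemma calL_apply (x : 'I_n -> R) l :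
  \sum_k calL A l k * x k = \sum_(k | k != l) A l k * (x l - x k).
Proof.
rewrite (bigD1 l) //= mxE eqxx big_distrl /= -big_split /=.
by apply: eq_bigr => k kl; rewrite mxE eq_sym (negbTE kl) mulrBr mulNr.
Qed.

(* Constant vectors lie in the kernel of calL. *)
Lemma det_calL (i0 : 'I_n) : \det (calL A) = 0.
Proof.
rewrite -det_tr; apply/eqP/det0P; exists (const_mx 1).
  by apply/eqP => /rowP /(_ i0); rewrite !mxE; apply/eqP; exact: oner_neq0.
apply/rowP => l; rewrite !mxE.
have E : \sum_k calL A l k * 1 = 0.
  by rewrite (calL_apply (fun _ => 1)) big1 // => m _; rewrite subrr mulr0.
by apply: etrans E; apply: eq_bigr => m _; rewrite !mxE mulr1 mul1r.
Qed.

(* Each column of adj calL is in the kernel of calL, hence constant. *)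
Lemma adj_calL_col (j k : 'I_n) : \adj (calL A) k j = alpha A j.
Proof.
have := mul_mx_adj (calL A); rewrite det_calL // => calL_adj.
pose x m := \adj (calL A) m j.
transitivity (x j); last by rewrite /x mxE.
change (x k = x j); apply: (max_principle A_nonneg A_irr) => l _.
rewrite -(calL_apply x); move/matrixP/(_ l j): calL_adj; rewrite !mxE mul0rn.
by rewrite /x => ->.
Qed.

(* Kirchhoff's law: the rows of adj calL are in the left kernel of calL. *)
Lemma alpha_kirchhoff j : \sum_k (alpha A j * A j k - alpha A k * A k j) = 0.
Proof.
have := mul_adj_mx (calL A); rewrite (det_calL j).
move/matrixP/(_ j j); rewrite !mxE mul0rn => E.
rewrite (bigD1 j) //= subrr add0r sumrB -mulr_sumr.
apply: (etrans _ E); rewrite [RHS](bigD1 j) //= adj_calL_col mxE eqxx.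
congr (_ + _); rewrite -sumrN; apply: eq_bigr => k kj.
by rewrite adj_calL_col mxE (negbTE kj) mulrN.
Qed.

(* Kato-type inequality: if x w + calL w vanishes at row l, with x >= 0,
   then |w| is a subsolution of the Laplacian at l. *)
Lemma abs_subsolution (x : R) (w : 'I_n -> R) l : 0 <= x ->
  x * w l + \sum_m calL A l m * w m = 0 ->
  \sum_(k | k != l) A l k * (`|w l| - `|w k|) <= 0.
Proof.
move=> x0; rewrite calL_apply.
set a := \sum_(k | k != l) A l k.
have a0 : 0 <= a by apply: sumr_ge0 => m ml; rewrite A_nonneg // eq_sym.
have lap_split (y : 'I_n -> R) : \sum_(k | k != l) A l k * (y l - y k)
    = a * y l - \sum_(k | k != l) A l k * y k.
  by rewrite /a mulr_suml -sumrB; apply: eq_bigr => m _; rewrite mulrBr.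
rewrite !lap_split addrA => /eqP; rewrite subr_eq0 -mulrDl => /eqP row_eq.
have : (x + a) * `|w l| <= \sum_(k | k != l) A l k * `|w k|.
  rewrite -(ger0_norm (addr_ge0 x0 a0)) -normrM row_eq.
  apply: le_trans (ler_norm_sum _ _ _) _; apply: ler_sum => m ml.
  by rewrite normrM ger0_norm // A_nonneg // eq_sym.
have : 0 <= x * `|w l| by rewrite mulr_ge0.
rewrite mulrDl; set s := \sum_(k | _) _; lra.
Qed.

Lemma shifted_kernel_trivial (x : R) (w : 'I_n -> R) i : 0 <= x -> w i = 0 ->
  (forall l, l != i -> x * w l + \sum_m calL A l m * w m = 0) ->
  forall k, w k = 0.
Proof.
move=> x0 wi w_eq k; apply/normr0_eq0; rewrite -(normr0 R) -wi.
apply: (max_principle A_nonneg A_irr (w := fun m => `|w m|)) => l _.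
have [-> | li] := eqVneq l i; last exact: abs_subsolution x0 (w_eq l li).
apply: sumr_le0 => m mi; rewrite wi normr0 sub0r mulrN oppr_le0.
by rewrite mulr_ge0 // A_nonneg // eq_sym.
Qed.

Lemma minor_shift_nonsingular (i : 'I_n) (x : R) : 0 <= x ->
  \det (x%:M + row' i (col' i (calL A))) != 0.
Proof.
move=> x0; set N := row' i (col' i (calL A)).
apply/negP => /eqP det0.
have /det0P [v v0 Nv] : \det ((x%:M + N)^T) == 0 by rewrite det_tr det0.
pose w m := if unlift i m is Some k then v 0 k else 0.
have wi : w i = 0 by rewrite /w unlift_none.
have w_lift k : w (lift i k) = v 0 k by rewrite /w liftK.
have w_eq l : l != i -> x * w l + \sum_m calL A l m * w m = 0.
  rewrite eq_sym => /unlift_some [l' -> _]; move/rowP/(_ l'): Nv; rewrite !mxE => Nl.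
  rewrite (bigD1_ord i) //= wi mulr0 add0r; apply: etrans Nl.
  rewrite [RHS](bigD1 l') //= !mxE eqxx /= mulr1n mulrDr -addrA w_lift mulrC.
  congr (_ + _); rewrite [LHS](bigD1 l') //= w_lift mulrC !mxE; congr (_ + _).
  apply: eq_bigr => k kl; rewrite w_lift mulrC !mxE (eq_sym l' k) (negbTE kl).
  by rewrite mulr0n add0r.
apply: (negP v0); apply/eqP/rowP => k; rewrite mxE -w_lift.
exact: shifted_kernel_trivial x0 wi w_eq _.
Qed.

(* alpha_i is the i-th principal minor of calL, hence positive. *)
Lemma alpha_pos i : 0 < alpha A i.
Proof.
rewrite /alpha /cofactor addnn -signr_odd odd_double expr0 mul1r.
by apply: det_pos_of_shifts_nonsingular => x; apply: minor_shift_nonsingular.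
Qed.

End Alpha.

(* The spectral bound dominates the real part of every eigenvalue; the set
   of these real parts is bounded since the eigenvalues are the finitely
   many roots of the characteristic polynomial. *)
Lemma spectral_bound_ge (R : realType) n (M : 'M[R]_n) (z : R[i]) :
  eigenvalue (map_mx (real_complex R) M) z -> complex.Re z <= spectral_bound M.
Proof.
move=> z_eig; apply: sup_upper_bound; last by exists z.
split; first by exists (complex.Re z); exists z.
have [rs Hrs] := closed_field_poly_normal (char_poly (map_mx (real_complex R) M)).
exists (\sum_(w <- rs) `|complex.Re w|) => r [w w_eig <-].
have w_rs : w \in rs.
  move: w_eig; rewrite /= eigenvalue_root_char Hrs rootZ; last first.
    by rewrite lead_coef_eq0 -size_poly_eq0 size_char_poly.
  by rewrite root_prod_XsubC.
rewrite (big_rem _ w_rs) /=; apply: le_trans (ler_norm _) _.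
by rewrite lerDl sumr_ge0.
Qed.

Lemma diagonalization_eigenvalue (F : fieldType) m (B P : 'M[F]_m) (X : 'rV[F]_m) k :
  P \in unitmx -> B = invmx P *m diag_mx X *m P -> eigenvalue B (X 0 k).
Proof.
move=> P_unit B_diag; apply/eigenvalueP; exists (row k P).
  rewrite B_diag !mulmxA -row_mul mulmxV //.
  have -> : row k 1%:M *m diag_mx X = X 0 k *: row k (1%:M : 'M[F]_m).
    by apply/rowP => j; rewrite mul_mx_diag !mxE; case: eqP => [->|_];
      rewrite ?mulr1n ?mulr0n ?mul0r ?mulr0 ?mul1r ?mulr1.
  by rewrite -scalemxAl -row_mul mul1mx.
apply/negP => /eqP Pk0.
have : row k (P *m invmx P) = 0 by rewrite row_mul Pk0 mul0mx.
by rewrite mulmxV // => /rowP /(_ k) /eqP; rewrite !mxE eqxx oner_eq0.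
Qed.

Section SymmetricForms.
Variables (R : realType) (n : nat).
Local Notation toC := (real_complex R).
Local Open Scope sesquilinear_scope.

Lemma diag_form_le (X y : 'rV[R[i]]_n) (s : R) :
  X \is a realmx -> (forall k, complex.Re (X 0 k) <= s) ->
  (y *m diag_mx X *m y ^t*) 0 0 <= toC s * (y *m y ^t*) 0 0.
Proof.
move=> X_real X_le; rewrite !mxE mulr_sumr; apply: ler_sum => k _.
rewrite mul_mx_diag !mxE mulrAC -normCK [toC s * _]mulrC.
rewrite ler_wpM2l ?exprn_ge0 //.
have Xk_real : X 0 k \is Num.real by apply: (mxOverP X_real).
by rewrite -(RRe_real Xk_real) lecR.
Qed.

(* Rayleigh bound for real symmetric matrices: the quadratic form is bounded
   by any upper bound of the (real parts of the) eigenvalues times the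
   squared norm, by the spectral theorem applied to the complexification. *)
Lemma symmetric_form_le (S : 'M[R]_n) (s : R) (x : 'rV[R]_n) :
  (forall i j, S i j = S j i) ->
  (forall z, eigenvalue (map_mx toC S) z -> complex.Re z <= s) ->
  (x *m S *m x^T) 0 0 <= s * (x *m x^T) 0 0.
Proof.
move=> S_sym S_eig.
set Sc := map_mx toC S; set xc := map_mx toC x.
have toC_real r : toC r \is Num.real by apply/complex_realP; exists r.
have Sc_adj : Sc ^t* = Sc.
  by apply/matrixP => i j; rewrite !mxE conj_Creal ?toC_real // S_sym.
have xc_adj : xc ^t* = map_mx toC x^T.
  by apply/matrixP => i j; rewrite !mxE conj_Creal ?toC_real.
have Sc_herm : Sc \is hermsymmx.
  by apply/is_hermitianmxP; rewrite expr0 scale1r Sc_adj.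
have /orthomx_spectralP Sc_diag : Sc \is normalmx by apply/normalmxP; rewrite Sc_adj.
set P := spectralmx Sc in Sc_diag; set X := spectral_diag Sc in Sc_diag.
have P_unitary : P \is unitarymx by apply: spectral_unitarymx.
set y := xc *m P^t*.
have y_adj : y ^t* = P *m xc ^t* by rewrite /y trmx_mul map_mxM trmxCK.
have form_y : xc *m Sc *m xc ^t* = y *m diag_mx X *m y ^t*.
  by rewrite y_adj {1}Sc_diag invmx_unitary // /y !mulmxA.
have norm_y : xc *m xc ^t* = y *m y ^t* by rewrite y_adj /y mulmxA mulmxKtV.
have X_le k : complex.Re (X 0 k) <= s.
  apply/S_eig/(diagonalization_eigenvalue _ (unitarymx_unit P_unitary)).
  exact: Sc_diag.
have form_toC : toC ((x *m S *m x^T) 0 0) = (xc *m Sc *m xc ^t*) 0 0.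
  by rewrite xc_adj -!map_mxM [RHS]mxE.
have norm_toC : toC ((x *m x^T) 0 0) = (xc *m xc ^t*) 0 0.
  by rewrite xc_adj -!map_mxM [RHS]mxE.
rewrite -lecR rmorphM /= form_toC norm_toC form_y norm_y.
by apply: diag_form_le; rewrite ?hermitian_spectral_diag_real.
Qed.

End SymmetricForms.

Section BalancedRayleigh.
Variables (R : realType) (n : nat).
Local Notation toC := (real_complex R).

(* Diagonal similarity D M D^-1 preserves eigenvalues (here: one inclusion,
   mapping a left eigenvector v of D M D^-1 to v D). *)
Lemma diag_similar_eigenvalue (M : 'M[R]_n) (d : 'I_n -> R) z :
  (forall i, d i != 0) ->
  eigenvalue (map_mx toC (\matrix_(i, j) (d i * M i j / d j))) z ->
  eigenvalue (map_mx toC M) z.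
Proof.
move=> d_nz /eigenvalueP [v v_eig v_nz]; apply/eigenvalueP.
exists (\row_j (v 0 j * toC (d j))).
  apply/rowP => j; move/rowP/(_ j): v_eig; rewrite !mxE => v_eig.
  rewrite mulrA -v_eig mulr_suml; apply: eq_bigr => i _.
  rewrite !mxE -!mulrA -!rmorphM; congr (_ * toC _).
  by field; rewrite d_nz.
apply: contraNneq v_nz => /rowP v0; apply/eqP/rowP => j; move: (v0 j).
rewrite !mxE => /eqP; rewrite mulf_eq0 -(rmorph0 toC) (inj_eq (@complexI R)).
by rewrite (negbTE (d_nz j)) orbF => /eqP.
Qed.

(* Rayleigh bound for a matrix M in detailed balance with positive weights w
   (w_i M_ij = w_j M_ji): M is diagonally similar to a symmetric matrix, so
   its w-weighted quadratic form is bounded by the spectral bound. *)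
Lemma balanced_form_le (M : 'M[R]_n) (w phi : 'I_n -> R) :
  (forall i, 0 < w i) -> (forall i j, w i * M i j = w j * M j i) ->
  \sum_i w i * phi i * (\sum_j M i j * phi j)
    <= spectral_bound M * \sum_i w i * phi i ^+ 2.
Proof.
move=> w_pos M_bal.
pose d i := Num.sqrt (w i).
have d_nz i : d i != 0 by rewrite gt_eqF // sqrtr_gt0.
have w_sq i : w i = d i ^+ 2 by rewrite sqr_sqrtr // ltW.
pose S := \matrix_(i, j) (d i * M i j / d j).
have S_sym i j : S i j = S j i.
  have := M_bal i j; rewrite !mxE !w_sq => Mij.
  transitivity (d i ^+ 2 * M i j / (d i * d j)); first by field; rewrite !d_nz.
  by rewrite Mij; field; rewrite !d_nz.
pose x := \row_i (d i * phi i).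
have form_x : (x *m S *m x^T) 0 0 = \sum_i w i * phi i * (\sum_j M i j * phi j).
  rewrite mxE; under eq_bigr do rewrite mxE mulr_suml.
  rewrite exchange_big; apply: eq_bigr => i _; rewrite mulr_sumr.
  by apply: eq_bigr => j _; rewrite !mxE w_sq; field; rewrite !d_nz.
have norm_x : (x *m x^T) 0 0 = \sum_i w i * phi i ^+ 2.
  by rewrite mxE; apply: eq_bigr => i _; rewrite !mxE w_sq; ring.
rewrite -form_x -norm_x; apply: symmetric_form_le => // z /(diag_similar_eigenvalue d_nz).
exact: spectral_bound_ge.
Qed.

End BalancedRayleigh.

(* The weighted energy inequalities combine into the theorem by an exact
   algebraic identity: with weights al > 0 and positive u, v,
     sum al u^2 (u - c v) + c^3 sum al v^2 (v - b u)
       = sum al (c v - u)^2 (c v + u) + (1 - b c) sum al c^2 v^2 u,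
   where both sums on the right are nonnegative when b c <= 1. *)
Section CompetitionAlgebra.
Variables (R : realFieldType) (I : finType) (i0 : I).
Variables (al u v : I -> R) (b c lu lv : R).
Hypotheses (al_pos : forall i, 0 < al i) (u_pos : forall i, 0 < u i)
  (v_pos : forall i, 0 < v i) (c_pos : 0 < c) (bc_le1 : b * c <= 1).

Let Su := \sum_i al i * u i ^+ 2.
Let Sv := \sum_i al i * v i ^+ 2.
Let Mi := \sum_i al i * (c * v i - u i) ^+ 2 * (c * v i + u i).
Let K := \sum_i al i * (c ^+ 2 * v i ^+ 2 * u i).

Hypothesis lu_energy : lu * Su <= - \sum_i al i * u i ^+ 2 * (u i - c * v i).
Hypothesis lv_energy : lv * Sv <= - \sum_i al i * v i ^+ 2 * (v i - b * u i).

Let pos_sum (F : I -> R) : (forall i, 0 < F i) -> 0 < \sum_i F i.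
Proof.
move=> F_pos; rewrite (bigD1 i0) //= ltr_pwDl // sumr_ge0 // => i _.
exact: ltW.
Qed.

Let Mi_term_ge0 i : 0 <= al i * (c * v i - u i) ^+ 2 * (c * v i + u i).
Proof.
have c_vi := mulr_gt0 c_pos (v_pos i).
apply: mulr_ge0; last by rewrite ltW // addr_gt0.
by rewrite mulr_ge0 ?sqr_ge0 // ltW.
Qed.

Lemma competition_identity :
  \sum_i al i * u i ^+ 2 * (u i - c * v i)
    + c ^+ 3 * \sum_i al i * v i ^+ 2 * (v i - b * u i)
  = Mi + (1 - b * c) * K.
Proof.
rewrite /Mi /K !mulr_sumr -!big_split; apply: eq_bigr => i _ /=; ring.
Qed.

(* Adding the two energy inequalities (the second scaled by c^3). *)
Lemma competition_chain :
  lu * Su + c ^+ 3 * lv * Sv <= - Mi - (1 - b * c) * K.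
Proof.
rewrite -opprD -competition_identity opprD -mulrA -mulrN lerD //.
by rewrite ler_wpM2l // exprn_ge0 // ltW.
Qed.

Lemma competition_mid_ge0 : 0 <= Mi.
Proof. exact: sumr_ge0. Qed.

Lemma competition_cross_pos : 0 < K.
Proof. by apply: pos_sum => i; rewrite !mulr_gt0 ?exprn_gt0. Qed.

Lemma competition_mid_eq0 : Mi = 0 -> forall i, u i = c * v i.
Proof.
move=> /eqP; rewrite psumr_eq0 // => /allP terms0 i.
have := terms0 i (mem_index_enum i); rewrite !mulf_eq0 (gt_eqF (al_pos i)) /=.
rewrite (gt_eqF (addr_gt0 (mulr_gt0 c_pos (v_pos i)) (u_pos i))) orbF.
by rewrite orbb subr_eq0 eq_sym => /eqP.
Qed.

Let defect_ge0 : 0 <= (1 - b * c) * K.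
Proof. by rewrite mulr_ge0 ?subr_ge0 // ltW ?competition_cross_pos. Qed.

Lemma competition_lhs_le_mid : lu * Su + c ^+ 3 * lv * Sv <= - Mi.
Proof. by apply: le_trans competition_chain _; rewrite lerBlDr lerDl. Qed.

(* Equality forces both nonnegative defects to vanish: u = c v and b c = 1. *)
Lemma competition_equality :
  lu * Su + c ^+ 3 * lv * Sv = - Mi -> Mi = 0 ->
  (forall i, u i = c * v i) /\ b * c = 1.
Proof.
move=> E Mi0; split; first exact: competition_mid_eq0.
have chain := competition_chain; have defect := defect_ge0; rewrite E in chain.
have : (1 - b * c) * K = 0 by lra.
by move/eqP; rewrite mulf_eq0 (gt_eqF competition_cross_pos) orbF subr_eq0 => /eqP.
Qed.

Lemma competition_bounds :
  let LHS := lu * Su + c ^+ 3 * lv * Sv in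
  [/\ LHS <= - Mi, - Mi <= 0,
      (LHS = - Mi /\ - Mi = 0 -> (forall i, u i = c * v i) /\ b * c = 1)
    & (0 <= lv /\ 0 <= lu ->
         [/\ lv = 0, lu = 0, b * c = 1 & forall i, u i = c * v i])].
Proof.
split; first exact: competition_lhs_le_mid.
- by rewrite oppr_le0 competition_mid_ge0.
- by case=> E /eqP; rewrite oppr_eq0 => /eqP; apply: competition_equality.
- case=> lv_ge0 lu_ge0.
  have Su_pos : 0 < Su by apply: pos_sum => i; rewrite mulr_gt0 ?exprn_gt0.
  have Sv_pos : 0 < Sv by apply: pos_sum => i; rewrite mulr_gt0 ?exprn_gt0.
  have u_term : 0 <= lu * Su by rewrite mulr_ge0 // ltW.
  have v_term : 0 <= c ^+ 3 * lv * Sv by rewrite !mulr_ge0 ?exprn_ge0 // ltW.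
  have lhs_le := competition_lhs_le_mid; have mid_ge0 := competition_mid_ge0.
  have lu0 : lu * Su = 0 by lra.
  have lv0 : c ^+ 3 * lv * Sv = 0 by lra.
  have [u_cv bc1] : (forall i, u i = c * v i) /\ b * c = 1.
    by apply: competition_equality; lra.
  split => //.
    by move/eqP: lv0; rewrite !mulf_eq0 (gt_eqF c_pos) (gt_eqF Sv_pos) orbF => /eqP.
  by move/eqP: lu0; rewrite mulf_eq0 (gt_eqF Su_pos) orbF => /eqP.
Qed.

End CompetitionAlgebra.

Section Equilibrium.
Variables (R : realType) (n : nat) (A : 'M[R]_n).

Lemma linearization_balanced (al : 'I_n -> R) (mu : R) (h : 'I_n -> R) :
  (forall i j, al i * A i j = al j * A j i) ->
  forall i j, al i * (mu *: connL A + diag_mx (\row_k h k)) i j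
            = al j * (mu *: connL A + diag_mx (\row_k h k)) j i.
Proof.
move=> A_bal i j; have [->//|ij] := eqVneq i j.
rewrite !mxE (negbTE ij) eq_sym (negbTE ij) !mulr0n !addr0.
by rewrite mulrCA A_bal mulrCA.
Qed.

Lemma linearization_equilibrium (mu : R) (h r w : 'I_n -> R) i :
  mu * (\sum_j connL A i j * w j) + w i * (r i - w i) = 0 ->
  \sum_j (mu *: connL A + diag_mx (\row_k h k)) i j * w j
    = w i * (w i - (r i - h i)).
Proof.
move=> eq_i.
have -> : \sum_j (mu *: connL A + diag_mx (\row_k h k)) i j * w j
   = mu * (\sum_j connL A i j * w j) + h i * w i.
  rewrite mulr_sumr (bigD1 i) //= [in RHS](bigD1 i) //= !mxE eqxx mulr1n.
  rewrite mulrDl addrAC -mulrA; congr (_ + _ + _); apply: eq_bigr => j ji.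
  by rewrite !mxE eq_sym (negbTE ji) mulr0n addr0 mulrA.
by move: eq_i; lra.
Qed.

(* Energy inequality: for weights al > 0 in detailed balance with A and a
   positive equilibrium w, the Rayleigh bound with test function w gives
   lambda_1(mu, r - g) sum al w^2 <= - sum al w^2 (w - g). *)
Lemma lambda1_energy (al : 'I_n -> R) (mu : R) (r g w : 'I_n -> R) :
  (forall i, 0 < al i) -> (forall i j, al i * A i j = al j * A j i) ->
  positive_equilibrium A mu r w ->
  lambda1 A mu (fun i => r i - g i) * \sum_i al i * w i ^+ 2
    <= - \sum_i al i * w i ^+ 2 * (w i - g i).
Proof.
move=> al_pos A_bal [_ w_eq].
pose h i := r i - g i.
have := balanced_form_le w al_pos (linearization_balanced mu h A_bal).
under eq_bigr do rewrite (linearization_equilibrium h (w_eq _)) /h subKr.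
suff -> : \sum_i al i * w i ^+ 2 * (w i - g i)
          = \sum_i al i * w i * (w i * (w i - g i)).
  by rewrite /lambda1 mulNr lerN2.
by apply: eq_bigr => i _; ring.
Qed.

End Equilibrium.

Theorem mainTheorem5 (R : realType) (n : nat) (A : 'M[R]_n)
    (b c mu_u mu_v : R) (p q ustar vstar : 'I_n -> R) :
  (2 <= n)%N ->
  (forall i j, i != j -> 0 <= A i j) ->
  (* (A1) *)
  0 < b -> 0 < c -> b * c <= 1 ->
  (forall i, 0 < p i) -> (forall i, 0 < q i) ->
  (* (A2), (A3) *)
  irreducible_mx (connL A) ->
  cycle_balanced A ->
  0 < mu_u -> 0 < mu_v ->
  (* u* = w*(mu_u, p), v* = w*(mu_v, q) *)
  positive_equilibrium A mu_u p ustar ->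
  positive_equilibrium A mu_v q vstar ->
  let lu := lambda1 A mu_u (fun i => p i - c * vstar i) in
  let lv := lambda1 A mu_v (fun i => q i - b * ustar i) in
  let LHS := lu * (\sum_i alpha A i * ustar i ^+ 2)
             + c ^+ 3 * lv * (\sum_i alpha A i * vstar i ^+ 2) in
  let MID := - \sum_i alpha A i * (c * vstar i - ustar i) ^+ 2
                                 * (c * vstar i + ustar i) in
  [/\ LHS <= MID, MID <= 0,
      (LHS = MID /\ MID = 0 -> (forall i, ustar i = c * vstar i) /\ b * c = 1)
    & (0 <= lv /\ 0 <= lu ->
         [/\ lv = 0, lu = 0, b * c = 1 & forall i, ustar i = c * vstar i])].
Proof.
move=> n_ge2 A_nonneg _ c_pos bc_le1 _ _ A_irr A_bal _ _ u_eq v_eq.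
have i0 : 'I_n by exists 0%N; apply: leq_trans n_ge2.
have al_pos := alpha_pos A_nonneg A_irr.
have al_bal := detailed_balance A_nonneg A_bal al_pos (alpha_kirchhoff A_nonneg A_irr).
have u_energy := lambda1_energy (fun i => c * vstar i) al_pos al_bal u_eq.
have v_energy := lambda1_energy (fun i => b * ustar i) al_pos al_bal v_eq.
exact (competition_bounds i0 al_pos (proj1 u_eq) (proj1 v_eq) c_pos bc_le1 u_energy v_energy).
Qed.
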